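(* Let $g_1,\dots,g_\ell,h_1,\dots,h_m\in\mathbb{R}[x]=\mathbb{R}[x_1,\dots,x_n]$, $g_0=1$, $S=\{x: g_i(x)\ge0,\ i=1,\dots,\ell\}$, $I=\langle h_1,\dots,h_m\rangle$, $K=S\cap\mathcal{V}(I)$, and suppose $\mathcal{I}(K)=I$. Fix an integer $k$ with $k\ge \deg g_i$ and $k\ge\deg h_j$ for all $i,j$, let $d_i=\max\{d\in\mathbb{N}: 2d+\deg g_i\le k\}$, $e_j=k-\deg h_j$, $\Lambda(d)=\{\alpha\in\mathbb{N}^n:|\alpha|\le d\}$, $X=\prod_{i=0}^\ell\mathbb{R}[x]_{d_i}^{\Lambda(d_i)}\times\prod_{j=1}^m\mathbb{R}[x]_{e_j}$, and $\phi:X\to\mathbb{R}[x]$, $\phi\big((q_{0\alpha})_{\alpha\in\Lambda(d_0)},\dots,(q_{\ell\alpha})_{\alpha\in\Lambda(d_\ell)},r_1,\dots,r_m\big)=\sum_{i=0}^\ell\sum_{\alpha\in\Lambda(d_i)}q_{i\alpha}^2g_i+\sum_{j=1}^m r_jh_j$. Then for $q\in X$, $\phi(q)\in I$ if and only if $q_{i\alpha}\in(I:\langle g_i\rangle)=\{s\in\mathbb{R}[x]: sg_i\in I\}$ for all $\alpha\in\Lambda(d_i)$ and all $i=0,1,\dots,\ell$.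
   Context: $\mathbb{R}[x]_d$ denotes real polynomials of degree at most $d$. $\mathcal{V}(I)=\{x\in\mathbb{R}^n:p(x)=0\ \forall p\in I\}$ and $\mathcal{I}(K)=\{p\in\mathbb{R}[x]: p|_K=0\}$. *)

From HB Require Import structures.
From mathcomp Require Import all_boot all_order all_algebra.
From mathcomp Require Import reals.
From mathcomp Require Import mpoly.

Set Implicit Arguments.
Unset Strict Implicit.
Unset Printing Implicit Defensive.

Import Order.TTheory GRing.Theory Num.Theory.
Local Open Scope ring_scope.

Section Defs.
Variables (R : realType) (n : nat).

(* total degree of a polynomial; deg 0 := 0 (msize p = 1 + total degree, msize 0 = 0) *)
Definition deg (p : {mpoly R[n]}) : nat := (msize p).-1.

Definition deg_le (d : nat) (p : {mpoly R[n]}) : Prop := (msize p <= d.+1)%N.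

Definition in_ideal (m : nat) (h : 'I_m -> {mpoly R[n]}) (p : {mpoly R[n]}) : Prop :=
  exists c : 'I_m -> {mpoly R[n]}, p = \sum_(j < m) c j * h j.

Definition variety (m : nat) (h : 'I_m -> {mpoly R[n]}) (x : 'I_n -> R) : Prop :=
  forall p, in_ideal h p -> p.@[x] = 0.

Definition basic_semialg (l : nat) (g : 'I_l -> {mpoly R[n]}) (x : 'I_n -> R) : Prop :=
  forall i, 0 <= (g i).@[x].

Definition Kset (l m : nat) (g : 'I_l -> {mpoly R[n]}) (h : 'I_m -> {mpoly R[n]})
  (x : 'I_n -> R) : Prop := basic_semialg g x /\ variety h x.

Definition vanishing_ideal (K : ('I_n -> R) -> Prop) (p : {mpoly R[n]}) : Prop :=
  forall x, K x -> p.@[x] = 0.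

(* the family g_0 = 1, g_1, ..., g_l, indexed by 'I_l.+1 (index 0 is g_0) *)
Definition gext (l : nat) (g : 'I_l -> {mpoly R[n]}) (i : 'I_l.+1) : {mpoly R[n]} :=
  if unlift ord0 i is Some j then g j else 1.

(* d_i = max { d in N : 2d + deg g_i <= k } *)
Definition dbound (k : nat) (p : {mpoly R[n]}) : nat := ((k - deg p)./2)%N.

End Defs.

From HB Require Import structures.
From mathcomp Require Import all_boot all_order all_algebra.
From mathcomp Require Import reals.
From mathcomp Require Import mpoly.
Set Implicit Arguments.
Unset Strict Implicit.
Unset Printing Implicit Defensive.

Import Order.TTheory GRing.Theory Num.Theory.
Local Open Scope ring_scope.

(* Since I = I(K), membership in I means vanishing on K. The linear part
   sum r_j h_j vanishes on K, and on K each summand q_{i a}^2 g_i is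
   nonnegative, so phi(q) vanishes at a point of K iff every q_{i a}^2 g_i
   does, i.e. iff every q_{i a} g_i does (q^2 g = q (q g) over a domain). *)

Lemma sum_sqr_weighted_eq0 (R : realDomainType) (I : finType)
    (A : I -> finType) (w : I -> R) (v : forall i, A i -> R) :
  (forall i, 0 <= w i) ->
  \sum_i \sum_(a : A i) v i a ^+ 2 * w i = 0 <-> forall i a, v i a * w i = 0.
Proof.
move=> w_ge0.
have term_ge0 i a : 0 <= v i a ^+ 2 * w i by rewrite mulr_ge0 ?sqr_ge0.
split=> [sum0 i a | vw0].
- have inner0 : \sum_(a : A i) v i a ^+ 2 * w i = 0.
    by apply: (psumr_eq0P _ sum0) => // j _; apply: sumr_ge0.
  have : v i a ^+ 2 * w i = 0.
    by apply: (psumr_eq0P _ inner0) => // b _; apply: term_ge0.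
  by move/eqP; rewrite expr2 -mulrA mulf_eq0 => /orP[/eqP-> | /eqP//]; rewrite mul0r.
- by apply: big1 => i _; apply: big1 => a _; rewrite expr2 -mulrA vw0 mulr0.
Qed.

Section VanishingIdeal.
Variables (R : realType) (n : nat).
Implicit Types (K : ('I_n -> R) -> Prop) (p s : {mpoly R[n]}).

Lemma vanishing_idealDr K p s :
  vanishing_ideal K s -> vanishing_ideal K (p + s) <-> vanishing_ideal K p.
Proof.
move=> s0; split=> p0 x Kx; have := p0 x Kx;
  by rewrite mevalD s0 // addr0.
Qed.

Lemma vanishing_ideal_sum_sqr_weighted K (I : finType) (A : I -> finType)
    (w : I -> {mpoly R[n]}) (q : forall i, A i -> {mpoly R[n]}) :
  (forall x, K x -> forall i, 0 <= (w i).@[x]) ->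
  vanishing_ideal K (\sum_i \sum_(a : A i) q i a ^+ 2 * w i)
  <-> forall i a, vanishing_ideal K (q i a * w i).
Proof.
move=> w_ge0; rewrite /vanishing_ideal.
have evalE x : (\sum_i \sum_(a : A i) q i a ^+ 2 * w i).@[x]
    = \sum_i \sum_(a : A i) (q i a).@[x] ^+ 2 * (w i).@[x].
  rewrite rmorph_sum; apply: eq_bigr => i _.
  by rewrite rmorph_sum; apply: eq_bigr => a _; rewrite /= mevalM rmorphXn.
split=> [sos0 i a x Kx | qw0 x Kx].
- have := sos0 x Kx; rewrite evalE.
  by move/(sum_sqr_weighted_eq0 _ (w_ge0 x Kx)) => /(_ i a); rewrite mevalM.
- rewrite evalE; apply/(sum_sqr_weighted_eq0 _ (w_ge0 x Kx)) => i a.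
  by rewrite -mevalM qw0.
Qed.

End VanishingIdeal.

Section SemialgebraicSet.
Variables (R : realType) (n l m : nat).
Variables (g : 'I_l -> {mpoly R[n]}) (h : 'I_m -> {mpoly R[n]}).

Lemma gext_ge0 x : Kset g h x -> forall i, 0 <= (gext g i).@[x].
Proof.
move=> [Sx _] i; rewrite /gext.
by case: (unlift ord0 i) => [j|]; [exact: Sx | rewrite meval1 ler01].
Qed.

Lemma vanishing_ideal_lincomb (r : 'I_m -> {mpoly R[n]}) :
  vanishing_ideal (Kset g h) (\sum_(j < m) r j * h j).
Proof. by move=> x [_ Vx]; apply: Vx; exists r. Qed.

End SemialgebraicSet.

Theorem lemma2p4 (R : realType) (n l m : nat)
    (g : 'I_l -> {mpoly R[n]}) (h : 'I_m -> {mpoly R[n]})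
    (hIK : forall p : {mpoly R[n]},
        vanishing_ideal (Kset g h) p <-> in_ideal h p)
    (k : nat)
    (hkg : forall i, (deg (g i) <= k)%N)
    (hkh : forall j, (deg (h j) <= k)%N)
    (q : forall i : 'I_l.+1, 'X_{1..n < (dbound k (gext g i)).+1} -> {mpoly R[n]})
    (r : 'I_m -> {mpoly R[n]})
    (hq : forall i a, deg_le (dbound k (gext g i)) (q i a))
    (hr : forall j, deg_le (k - deg (h j)) (r j)) :
  in_ideal h (\sum_(i < l.+1) \sum_(a : 'X_{1..n < (dbound k (gext g i)).+1})
                 (q i a) ^+ 2 * gext g i
              + \sum_(j < m) r j * h j)
  <-> (forall (i : 'I_l.+1) (a : 'X_{1..n < (dbound k (gext g i)).+1}),
         in_ideal h (q i a * gext g i)).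
Proof.
rewrite -hIK (vanishing_idealDr _ (vanishing_ideal_lincomb r)).
rewrite (vanishing_ideal_sum_sqr_weighted q (@gext_ge0 _ _ _ _ g h)).
by split=> qg0 i a; apply/hIK/qg0.
Qed.
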